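(* Consider the online fair-division setting with deterministic feedback and the mechanism $\mathcal{M}_4$ described in the context. If all agents report truthfully, then $L_T\le 1+2n\,v_{\max}\rho_{\max}$ for all $T\ge 1$, and for every agent $i$ and every $T\ge1$, $U^e_{iT}-U_{iT}\le L_i\rho_{\max}$.
   Context: Resource and MMF: a divisible resource of size $1$ is shared by $n$ agents with entitlements $e_i>0$, $\sum_ie_i=1$. MMF$(e,d)$ on reported demands $d_1,\dots,d_n\ge0$: set $r=1$, $E=1$, $S=\{1,\dots,n\}$, $a=0$; process agents $j$ in ascending order of $d_j/e_j$; if $d_j<re_j/E$, set $a_j=d_j$, remove $j$ from $S$, $r\leftarrow r-d_j$, $E\leftarrow E-e_j$ and continue; otherwise set $a_k=re_k/E$ for all $k\in S$ and stop; output $a$. Online model: rounds $t=1,2,\dots$; agent $i$ has load $v_{it}\in(v_{\min},v_{\max}]$ ($v_{\min}>0$, fixed sequence), unknown non-decreasing payoff $f_i$, threshold $\alpha_i$, unit demand $\rho_i=f_i^{-1}(\alpha_i)\in[0,\rho_{\max}]$ ($\rho_{\max}$ known, $v_{\max}\rho_{\max}\le1$), true demand $d^*_{it}=v_{it}\rho_i$. Utility $u_i$ (of allocation per unit load) is strictly increasing on $[0,\rho_i]$, constant on $[\rho_i,\infty)$, $L_i$-Lipschitz. Deterministic feedback: receiving $a_{it}$ gives reward $X_{it}=f_i(a_{it}/v_{it})$. Mechanism $\mathcal{M}_4$: keep bounds $(\underline\rho_i,\bar\rho_i)$ initialised to $(0,\rho_{\max})$. The update with a pair $(x,X)$ is: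 if $X<\alpha_i$ set $\underline\rho_i\leftarrow\max(\underline\rho_i,x)$, else $\bar\rho_i\leftarrow\min(\bar\rho_i,x)$. Round 1: allocate $e_i$ to each agent, collect $X_i$, update with $(a_i/v_i,X_i)$. Each round $t\ge2$: set $\hat\rho_i=(\underline\rho_i+\bar\rho_i)/2$, obtain loads $v_i$, compute $a=$MMF$(e,(v_i\hat\rho_i)_i)$, allocate $a$, collect rewards $X_i$ and update each agent with $(a_i/v_i,X_i)$. Quantities: $\ell_{ur}(a)=1-\sum_ia_i$, $\ell_{or}(d,a)=\sum_i(a_i-d_i)^+$, $\ell_{ud}(d,a)=\sum_i(d_i-a_i)^+$, $\ell=\min(\ell_{ur}+\ell_{or},\ell_{ud})$, $L_T=\sum_{t\le T}\ell(d^*_t,a_t)$; $U_{iT}=\sum_{t\le T}u_i(a_{it}/v_{it})$, $U^e_{iT}=\sum_{t\le T}u_i(e_i/v_{it})$. *)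

From HB Require Import structures.
From mathcomp Require Import all_boot all_order all_algebra.
From mathcomp Require Import reals.
Set Implicit Arguments. Unset Strict Implicit. Unset Printing Implicit Defensive.
Import Order.TTheory GRing.Theory Num.Theory.
Local Open Scope ring_scope.

Section Defs.
Variables (R : realType) (n : nat).
Implicit Types (e d a : 'I_n -> R).

(** MMF(e,d): process agents in ascending order of d_j/e_j.  [mmf_rec s r E]
    handles the remaining (sorted) list s with remaining resource r and
    remaining entitlement E; agents already removed are set by outer calls. *)
Fixpoint mmf_rec (e d : 'I_n -> R) (s : seq 'I_n) (r E : R) : 'I_n -> R :=
  match s with
  | [::] => fun _ => 0
  | j :: s' =>
      if d j < r * e j / E then
        let rest := mmf_rec e d s' (r - d j) (E - e j) in
        fun k => if k == j then d j else rest k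
      else fun k => if k \in (j :: s') then r * e k / E else 0
  end.

Definition mmf (e d : 'I_n -> R) : 'I_n -> R :=
  mmf_rec e d (sort (fun j k : 'I_n => d j / e j <= d k / e k) (enum 'I_n)) 1 1.

Definition upd (alpha : R) (b : R * R) (x X : R) : R * R :=
  if X < alpha then (Num.max b.1 x, b.2) else (b.1, Num.min b.2 x).

(** Mechanism M4 under deterministic feedback (rewards X = f_i(a_i/v_i)
    reported truthfully).  v t i is the load of agent i in round t (t >= 1).
    [m4_bounds t] are the bounds (lo_i, hi_i) after rounds 1..t;
    [m4_alloc t] is the allocation of round t (t >= 1). *)
Section Mech.
Variables (e : 'I_n -> R) (v : nat -> 'I_n -> R) (f : 'I_n -> R -> R)
          (alpha : 'I_n -> R) (rho_max : R).

Fixpoint m4_bounds (t : nat) : 'I_n -> R * R :=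
  match t with
  | 0 => fun _ => (0, rho_max)
  | t'.+1 =>
      let b := m4_bounds t' in
      let a := if t' == 0%N then e
               else mmf e (fun i => v t'.+1 i * (((b i).1 + (b i).2) / 2)) in
      fun i => upd (alpha i) (b i) (a i / v t'.+1 i) (f i (a i / v t'.+1 i))
  end.

Definition m4_alloc (t : nat) : 'I_n -> R :=
  match t with
  | 0 => fun _ => 0
  | t'.+1 =>
      let b := m4_bounds t' in
      if t' == 0%N then e
      else mmf e (fun i => v t'.+1 i * (((b i).1 + (b i).2) / 2))
  end.
End Mech.

Definition ell_ur a : R := 1 - \sum_i a i.
Definition ell_or d a : R := \sum_i Num.max (a i - d i) 0.
Definition ell_ud d a : R := \sum_i Num.max (d i - a i) 0.
Definition ell d a : R := Num.min (ell_ur a + ell_or d a) (ell_ud d a).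

End Defs.

(* Each agent's bounds always bracket its unit demand rho_i, so their width
   starts at rho_max and never increases.  From the second round on, MMF either
   serves every estimated demand exactly, or hands out the whole resource while
   giving nobody more than its estimate.  An agent served exactly is probed at
   the midpoint of its bounds; an over-served agent is probed below the midpoint
   but above rho_i, so its feedback moves the upper bound down to the probe.
   Either way the width at least halves and the probe lies within the lost width
   of rho_i.  Hence the loss of a round (under-delivery in the first case,
   over-allocation in the second) is at most v_max times the total width lost,
   and an agent's utility shortfall against its entitlement, which can only
   occur when it is served exactly, is at most L_i times its width lost; both
   sums telescope.  The first round loses at most 1 and costs no utility. *)

From mathcomp Require Import all_boot all_order all_algebra.
From mathcomp Require Import reals.
From mathcomp Require Import ring lra.
Set Implicit Arguments. Unset Strict Implicit. Unset Printing Implicit Defensive.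
Import Order.TTheory GRing.Theory Num.Theory.
Local Open Scope ring_scope.

Lemma share_le_remainder (R : realFieldType) (r E x : R) :
  0 < E -> E <= r -> x <= E -> r * x / E <= r - (E - x).
Proof.
move=> E_gt0 E_le_r x_le_E; rewrite -subr_ge0.
have -> : r - (E - x) - r * x / E = (r - E) * (E - x) / E by field; rewrite gt_eqF.
by apply: divr_ge0; [apply: mulr_ge0; rewrite subr_ge0 | apply: ltW].
Qed.

Section MaxMinFair.
Variables (R : realType) (n : nat) (e d : 'I_n -> R).
Hypothesis e_gt0 : forall i, 0 < e i.

Let by_ratio := fun j k : 'I_n => d j / e j <= d k / e k.

Lemma mmf_rec_stop j s r E : sorted by_ratio (j :: s) -> 0 < E -> E <= r ->
  ~~ (d j < r * e j / E) -> forall k, k \in j :: s -> e k <= r * e k / E <= d k.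
Proof.
move=> sorted_js E_gt0 E_le_r; rewrite -leNgt => stop k k_js.
have share_le_ratio : r / E <= d k / e k.
  have r_le_j : r / E <= d j / e j by rewrite ler_pdivlMr // mulrAC.
  move: k_js; rewrite inE => /orP[/eqP -> // | k_s]; apply: le_trans r_le_j _.
  have by_ratio_trans : transitive by_ratio by move=> ???; apply: le_trans.
  by move: (order_path_min by_ratio_trans sorted_js) => /allP /(_ k k_s).
rewrite mulrAC; apply/andP; split.
  by rewrite ler_pMl // ler_pdivlMr // mul1r.
by rewrite -ler_pdivlMr.
Qed.

Lemma mmf_rec_spec s : uniq s -> sorted by_ratio s ->
  forall r E, E = \sum_(k <- s) e k -> E <= r ->
  let a := mmf_rec e d s r E in
  (forall k, k \in s -> a k <= d k /\ (a k = d k \/ e k <= a k))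
  /\ ((forall k, k \in s -> a k = d k) \/ \sum_(k <- s) a k = r).
Proof.
elim: s => [|j s IH] /= uniq_js sorted_js r E E_def E_le_r.
  by split=> //; left.
move: uniq_js E_def => /andP[j_notin_s uniq_s]; rewrite big_cons => E_def.
have rest_ge0 : 0 <= \sum_(k <- s) e k by apply: sumr_ge0 => k _; apply: ltW.
have E_gt0 : 0 < E by rewrite E_def ltr_pwDl.
case: ifP => [served | /negbT stop].
- have rest_le : E - e j <= r - d j.
    have ej_le_E : e j <= E by rewrite E_def lerDl.
    by have := share_le_remainder E_gt0 E_le_r ej_le_E; lra.
  have [IH_alloc IH_sum] := IH uniq_s (path_sorted sorted_js) (r - d j) (E - e j)
    ltac:(by rewrite E_def addrC addKr) rest_le.
  split.
    move=> k; rewrite inE; case: eqP => [-> _ | _ /= k_s]; last exact: IH_alloc.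
    by split; [|left].
  case: IH_sum => [all_served | IH_sum].
    by left=> k; rewrite inE; case: eqP => [-> | _ /=] //; apply: all_served.
  right; rewrite big_cons eqxx (eq_big_seq (mmf_rec e d s (r - d j) (E - e j))).
    by rewrite IH_sum addrC subrK.
  by move=> k k_s; case: eqP => // k_j; move: j_notin_s; rewrite -k_j k_s.
- have shares := mmf_rec_stop sorted_js E_gt0 E_le_r stop.
  split.
    move=> k k_js; rewrite k_js; have /andP[ge_e le_d] := shares k k_js.
    by split; [|right].
  right; rewrite (eq_big_seq (fun k => r / E * e k)).
    by rewrite -mulr_sumr big_cons -E_def divfK // gt_eqF.
  by move=> k ->; rewrite mulrAC.
Qed.

Hypothesis e_sum1 : \sum_i e i = 1.

Lemma mmf_alloc_spec :
  (forall k, mmf e d k <= d k /\ (mmf e d k = d k \/ e k <= mmf e d k))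
  /\ ((forall k, mmf e d k = d k) \/ \sum_k mmf e d k = 1).
Proof.
rewrite /mmf -/by_ratio; set s := sort by_ratio (enum 'I_n).
have perm_s : perm_eq s (enum 'I_n) by rewrite perm_sort.
have in_s k : k \in s by rewrite (perm_mem perm_s) mem_enum.
have sorted_s : sorted by_ratio s by apply: sort_sorted => x y; apply: le_total.
have uniq_s : uniq s by rewrite sort_uniq enum_uniq.
have sum_s : 1 = \sum_(k <- s) e k by rewrite (perm_big _ perm_s) big_enum.
have [alloc sum] := mmf_rec_spec uniq_s sorted_s sum_s (lexx 1).
split=> [k | ]; first exact: alloc.
case: sum => [served | full]; [left=> k | right]; first exact: served.
by rewrite -big_enum -(perm_big _ perm_s).
Qed.

Lemma mmf_le_demand k : mmf e d k <= d k.
Proof. by have [/(_ k) []] := mmf_alloc_spec. Qed.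

Lemma mmf_demand_or_entitlement k : mmf e d k = d k \/ e k <= mmf e d k.
Proof. by have [/(_ k) []] := mmf_alloc_spec. Qed.

Hypothesis d_ge0 : forall i, 0 <= d i.

Lemma mmf_ge0 k : 0 <= mmf e d k.
Proof.
by case: (mmf_demand_or_entitlement k) => [-> // | ]; apply/le_trans/ltW.
Qed.

Lemma mmf_served_or_exhausted :
  (forall k, mmf e d k = d k) \/ \sum_k mmf e d k = 1.
Proof. by have [] := mmf_alloc_spec. Qed.

End MaxMinFair.

Section Bisection.
Variable R : realType.
Implicit Types (b : R * R) (al rho x X : R).

Definition width b := b.2 - b.1.
Definition midpoint b := (b.1 + b.2) / 2.
Definition brackets rho rho_max b := [&& 0 <= b.1, b.1 <= rho, rho <= b.2 & b.2 <= rho_max].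

Lemma brackets_midpoint_ge0 rho rho_max b : brackets rho rho_max b -> 0 <= midpoint b.
Proof. by case/and4P=> lo_ge0 lo_le hi_ge _; rewrite /midpoint; lra. Qed.

Lemma upd_width_le al b x X : width (upd al b x X) <= width b.
Proof.
rewrite /width /upd; case: ifP => _ /=; apply: lerB => //.
  by rewrite le_max lexx.
by rewrite ge_min lexx.
Qed.

Lemma upd_brackets al rho rho_max b x X : 0 <= x ->
  (X < al -> x <= rho) -> (al <= X -> rho <= x) ->
  brackets rho rho_max b -> brackets rho rho_max (upd al b x X).
Proof.
move=> x_ge0 below above /and4P[lo_ge0 lo_le hi_ge hi_le]; rewrite /upd.
case: ltP => [/below x_le | /above x_ge]; apply/and4P; split => //=.
- by rewrite le_max lo_ge0.
- by rewrite ge_max lo_le x_le.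
- by rewrite le_min hi_ge x_ge.
- by rewrite ge_min hi_le.
Qed.

Lemma upd_probe_gap al rho b x X :
  b.1 <= rho <= b.2 -> x <= midpoint b -> x = midpoint b \/ rho < x /\ al <= X ->
  `|x - rho| <= width b - width (upd al b x X).
Proof.
rewrite /width /midpoint => /andP[lo_le hi_ge] x_le probe.
have halved : 2 * ((upd al b x X).2 - (upd al b x X).1) <= b.2 - b.1.
  rewrite /upd; case: (ltP X al) probe => [_ [x_mid | [_ //]] | al_le _] /=.
  - have : x <= Num.max b.1 x by rewrite le_max lexx orbT.
    lra.
  - have : Num.min b.2 x <= x by rewrite ge_min lexx orbT.
    lra.
have gap : `|x - rho| <= (b.2 - b.1) / 2.
  by rewrite ler_distlC; case: probe => [-> | [rho_lt _]]; apply/andP; split; lra.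
lra.
Qed.

End Bisection.

Lemma ler_sum_telescope (R : numDomainType) (F G : nat -> R) m k : (m <= k)%N ->
  (forall t, (m <= t < k)%N -> F t <= G t - G t.+1) ->
  \sum_(m <= t < k) F t <= G m - G k.
Proof.
move=> m_le_k F_le; apply: le_trans (ler_sum_nat F_le) _.
rewrite -[G m - _]opprB -telescope_sumr // -sumrN.
by under [X in _ <= X]eq_bigr do rewrite opprB.
Qed.

Lemma maxr0_pM_le (R : realDomainType) (w w' y c : R) :
  0 <= w -> w <= w' -> 0 <= c -> (0 < y -> y <= c) -> Num.max (w * y) 0 <= w' * c.
Proof.
move=> w_ge0 w_le c_ge0 y_le; have c'_ge0 : 0 <= w' * c.
  by rewrite mulr_ge0 // (le_trans w_ge0).
rewrite ge_max c'_ge0 andbT; case: (leP y 0) => [y_le0 | y_gt0].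
  by rewrite (le_trans _ c'_ge0) // mulr_ge0_le0.
by apply: ler_pM => //; [apply: ltW | apply: y_le].
Qed.

Section Utility.
Variables (R : realDomainType) (u : R -> R) (rho : R).
Hypotheses
  (u_incr : forall x y, 0 <= x -> x < y -> y <= rho -> u x < u y)
  (u_sat : forall x, rho <= x -> u x = u rho).

Lemma utility_le_sat x : 0 <= x -> u x <= u rho.
Proof.
move=> x_ge0; case: (ltP x rho) => [x_lt | /u_sat -> //].
exact/ltW/u_incr.
Qed.

Lemma utility_nondecr x y : 0 <= x -> x <= y -> u x <= u y.
Proof.
move=> x_ge0; rewrite le_eqVlt => /predU1P[-> // | x_lt_y].
case: (leP y rho) => [y_le | /ltW /u_sat ->]; first exact/ltW/u_incr.
exact: utility_le_sat.
Qed.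

End Utility.

Lemma lipschitz_const_ge0 (R : numDomainType) (u : R -> R) (L : R) :
  (forall x y, 0 <= x -> 0 <= y -> `|u x - u y| <= L * `|x - y|) -> 0 <= L.
Proof.
move=> /(_ 0 1 (lexx 0) ler01); rewrite sub0r normrN normr1 mulr1.
exact/le_trans/normr_ge0.
Qed.

Section Mechanism.
Variables (R : realType) (n : nat) (e : 'I_n -> R) (v : nat -> 'I_n -> R)
  (f : 'I_n -> R -> R) (alpha rho : 'I_n -> R) (v_max rho_max : R).
Hypotheses (e_gt0 : forall i, 0 < e i) (e_sum1 : \sum_i e i = 1)
  (v_gt0 : forall t i, (0 < t)%N -> 0 < v t i)
  (rho_bounded : forall i, 0 <= rho i <= rho_max)
  (f_ge_alpha : forall i x, 0 <= x -> alpha i <= f i x -> rho i <= x)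
  (f_lt_alpha : forall i x, 0 <= x -> f i x < alpha i -> x <= rho i).

Let B t i := m4_bounds e v f alpha rho_max t i.
Let A t := m4_alloc e v f alpha rho_max t.
Let W t i := width (B t i).
Let estimate t i := v t.+1 i * midpoint (B t i).
Let probe t i := A t.+1 i / v t.+1 i.

Lemma m4_alloc_next t : (0 < t)%N -> A t.+1 = mmf e (estimate t).
Proof. by case: t. Qed.

Lemma m4_bounds_next t i :
  B t.+1 i = upd (alpha i) (B t i) (probe t i) (f i (probe t i)).
Proof. by case: t. Qed.

Lemma alloc_eq_probe t i : A t.+1 i = v t.+1 i * probe t i.
Proof. by rewrite /probe mulrC divfK // gt_eqF // v_gt0. Qed.

Lemma probe_ge0 t : (forall i, brackets (rho i) rho_max (B t i)) ->
  forall i, 0 <= probe t i.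
Proof.
move=> bracketed i; apply: divr_ge0; last exact/ltW/v_gt0.
case: t bracketed => [_ | t bracketed]; first exact: ltW.
rewrite m4_alloc_next //; apply: mmf_ge0 => // j.
by rewrite mulr_ge0 ?(brackets_midpoint_ge0 (bracketed j)) // ltW // v_gt0.
Qed.

Lemma bounds_bracket t i : brackets (rho i) rho_max (B t i).
Proof.
elim: t i => [i | t IH i].
  by have /andP[rho_ge0 rho_le] := rho_bounded i; apply/and4P; split.
rewrite m4_bounds_next; apply: upd_brackets; last exact: IH.
- exact: probe_ge0.
- exact/f_lt_alpha/probe_ge0.
- exact/f_ge_alpha/probe_ge0.
Qed.

Lemma width_ge0 t i : 0 <= W t i.
Proof. by have /and4P[_ lo_le hi_ge _] := bounds_bracket t i; rewrite /W /width; lra. Qed.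

Lemma width_le_rho_max t i : W t i <= rho_max.
Proof. by have /and4P[lo_ge0 _ _ hi_le] := bounds_bracket t i; rewrite /W /width; lra. Qed.

Lemma width_drop_ge0 t i : 0 <= W t i - W t.+1 i.
Proof. by rewrite subr_ge0 /W m4_bounds_next upd_width_le. Qed.

Lemma probe_eq_midpoint t i :
  A t.+1 i = estimate t i -> probe t i = midpoint (B t i).
Proof. by rewrite /probe => ->; rewrite mulrC mulKf // gt_eqF // v_gt0. Qed.

Lemma probe_le_midpoint t i : (0 < t)%N -> probe t i <= midpoint (B t i).
Proof.
move=> t_gt0; rewrite -(ler_pM2l (v_gt0 i (ltn0Sn t))) -alloc_eq_probe.
by rewrite m4_alloc_next // mmf_le_demand.
Qed.

(* A probe is informative when it sits at the midpoint, or when it overshoots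
   [rho], because the feedback then moves the upper bound down to it. *)
Lemma probe_gap t i : probe t i <= midpoint (B t i) ->
  probe t i = midpoint (B t i) \/ rho i < probe t i ->
  `|probe t i - rho i| <= W t i - W t.+1 i.
Proof.
move=> probe_le informative; have /and4P[_ lo_le hi_ge _] := bounds_bracket t i.
rewrite /W m4_bounds_next; apply: upd_probe_gap => //; first by rewrite lo_le hi_ge.
case: informative => [-> | rho_lt]; [left | right] => //; split=> //.
rewrite leNgt; apply/negP => /(f_lt_alpha (probe_ge0 (bounds_bracket t) i)).
by rewrite leNgt rho_lt.
Qed.

Hypothesis v_le_max : forall t i, (0 < t)%N -> v t i <= v_max.

Let dstar t i := v t i * rho i.

Lemma v_max_ge0 (i : 'I_n) : 0 <= v_max.
Proof. exact: le_trans (ltW (v_gt0 i (ltn0Sn 0))) (v_le_max i (ltn0Sn 0)). Qed.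

Lemma loss_first_round : ell (dstar 1) (A 1) <= 1.
Proof.
rewrite /ell ge_min; apply/orP; left.
rewrite /ell_ur /ell_or e_sum1 subrr add0r -e_sum1; apply: ler_sum => i _.
rewrite ge_max (ltW (e_gt0 i)) andbT gerBl mulr_ge0 //; first exact/ltW/v_gt0.
by case/andP: (rho_bounded i).
Qed.

Lemma loss_next_round t : (0 < t)%N ->
  ell (dstar t.+1) (A t.+1) <= \sum_i v_max * W t i - \sum_i v_max * W t.+1 i.
Proof.
move=> t_gt0; rewrite -sumrB.
have v_bounds i := conj (ltW (v_gt0 i (ltn0Sn t))) (v_le_max i (ltn0Sn t)).
have probe_le i := probe_le_midpoint i t_gt0.
case: (mmf_served_or_exhausted (estimate t) e_gt0 e_sum1); rewrite -m4_alloc_next //.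
- move=> served; rewrite /ell ge_min; apply/orP; right; apply: ler_sum => i _.
  have [v_ge0 v_le] := v_bounds i.
  rewrite /dstar alloc_eq_probe -!mulrBr.
  apply: maxr0_pM_le; rewrite ?width_drop_ge0 // => _.
  rewrite (le_trans (ler_norm _)) // distrC probe_gap //; left.
  exact: probe_eq_midpoint.
- move=> exhausted; rewrite /ell ge_min /ell_ur exhausted subrr add0r.
  apply/orP; left; apply: ler_sum => i _.
  have [v_ge0 v_le] := v_bounds i.
  rewrite /dstar alloc_eq_probe -!mulrBr.
  apply: maxr0_pM_le; rewrite ?width_drop_ge0 // => rho_lt.
  by rewrite (le_trans (ler_norm _)) // probe_gap //; right; rewrite -subr_gt0.
Qed.

Lemma loss_bound T : (0 < T)%N ->
  \sum_(1 <= t < T.+1) ell (dstar t) (A t) <= 1 + 2 * n%:R * v_max * rho_max.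
Proof.
move=> T_gt0; rewrite big_nat_recl //.
have tail := ler_sum_telescope (G := fun t => \sum_i v_max * W t i) T_gt0
  (fun t t_range => loss_next_round (proj1 (andP t_range))).
apply: le_trans (lerD loss_first_round tail) _; rewrite lerD2l -sumrB.
have -> : 2 * n%:R * v_max * rho_max = \sum_(i < n) 2 * (v_max * rho_max).
  by rewrite sumr_const card_ord -mulr_natr; ring.
apply: ler_sum => i _; have v_ge0 := v_max_ge0 i.
have first_le : v_max * W 1 i <= v_max * rho_max by rewrite ler_wpM2l // width_le_rho_max.
have last_ge0 : 0 <= v_max * W T i by rewrite mulr_ge0 // width_ge0.
have : 0 <= v_max * rho_max by rewrite (le_trans _ first_le) // mulr_ge0 // width_ge0.
lra.
Qed.

Variables (u : 'I_n -> R -> R) (Lip : 'I_n -> R).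
Hypotheses
  (u_incr : forall i x y, 0 <= x -> x < y -> y <= rho i -> u i x < u i y)
  (u_sat : forall i x, rho i <= x -> u i x = u i (rho i))
  (u_lip : forall i x y, 0 <= x -> 0 <= y -> `|u i x - u i y| <= Lip i * `|x - y|).

Lemma regret_next_round t i : (0 < t)%N ->
  u i (e i / v t.+1 i) - u i (probe t i) <= Lip i * W t i - Lip i * W t.+1 i.
Proof.
rewrite -mulrBr => t_gt0; have v_pos := v_gt0 i (ltn0Sn t).
have Lip_ge0 := lipschitz_const_ge0 (u_lip i).
have share_ge0 : 0 <= e i / v t.+1 i by rewrite divr_ge0 // ltW.
have probe_pos := probe_ge0 (bounds_bracket t) i.
have := mmf_demand_or_entitlement (estimate t) e_gt0 e_sum1 i; rewrite -m4_alloc_next //.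
case=> [served | entitled].
- have gap := probe_gap (probe_le_midpoint i t_gt0) (or_introl (probe_eq_midpoint served)).
  have := u_lip i (proj1 (andP (rho_bounded i))) probe_pos.
  rewrite [X in _ <= _ * X]distrC => /(le_trans (ler_norm _)) lip.
  have := utility_le_sat (@u_incr i) (@u_sat i) share_ge0.
  have := ler_wpM2l Lip_ge0 gap; lra.
- have : u i (e i / v t.+1 i) <= u i (probe t i).
    apply: (utility_nondecr (@u_incr i) (@u_sat i) share_ge0).
    by rewrite /probe ler_pM2r // invr_gt0.
  have := mulr_ge0 Lip_ge0 (width_drop_ge0 t i); lra.
Qed.

Lemma regret_bound T i : (0 < T)%N ->
  \sum_(1 <= t < T.+1) u i (e i / v t i) - \sum_(1 <= t < T.+1) u i (A t i / v t i)
    <= Lip i * rho_max.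
Proof.
move=> T_gt0; rewrite -sumrB big_nat_recl //= subrr add0r.
have tail := ler_sum_telescope (G := fun t => Lip i * W t i) T_gt0
  (fun t t_range => regret_next_round i (proj1 (andP t_range))).
apply: le_trans tail _; rewrite -mulrBr.
rewrite ler_wpM2l ?(lipschitz_const_ge0 (u_lip i)) //.
by have := width_le_rho_max 1 i; have := width_ge0 T i; lra.
Qed.

End Mechanism.

Theorem theorem4 (R : realType) (n : nat)
    (e : 'I_n -> R) (v : nat -> 'I_n -> R) (f : 'I_n -> R -> R)
    (alpha rho Lip : 'I_n -> R) (u : 'I_n -> R -> R)
    (v_min v_max rho_max : R) :
  (forall i, 0 < e i) ->
  \sum_i e i = 1 ->
  0 < v_min ->
  (forall t i, (1 <= t)%N -> v_min < v t i <= v_max) ->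
  v_max * rho_max <= 1 ->
  (* payoffs are non-decreasing *)
  (forall i x y, 0 <= x -> x <= y -> f i x <= f i y) ->
  (* rho_i = f_i^{-1}(alpha_i) (generalized inverse), in [0, rho_max] *)
  (forall i, 0 <= rho i <= rho_max) ->
  (forall i x, 0 <= x -> alpha i <= f i x -> rho i <= x) ->
  (forall i x, 0 <= x -> f i x < alpha i -> x <= rho i) ->
  (* utilities *)
  (forall i x y, 0 <= x -> x < y -> y <= rho i -> u i x < u i y) ->
  (forall i x, rho i <= x -> u i x = u i (rho i)) ->
  (forall i x y, 0 <= x -> 0 <= y -> `|u i x - u i y| <= Lip i * `|x - y|) ->
  forall T : nat, (1 <= T)%N ->
    (\sum_(1 <= t < T.+1)
        ell (fun i => v t i * rho i) (m4_alloc e v f alpha rho_max t)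
       <= 1 + 2 * n%:R * v_max * rho_max)
    /\
    (forall i,
       \sum_(1 <= t < T.+1) u i (e i / v t i)
       - \sum_(1 <= t < T.+1) u i (m4_alloc e v f alpha rho_max t i / v t i)
       <= Lip i * rho_max).
Proof.
move=> e_gt0 e_sum1 v_min_gt0 v_range _ _ rho_bounded f_ge f_lt u_incr u_sat u_lip T T_gt0.
have v_gt0 t i : (0 < t)%N -> 0 < v t i.
  by move=> /(v_range t i) /andP[/(lt_trans v_min_gt0)].
have v_le_max t i : (0 < t)%N -> v t i <= v_max by move=> /(v_range t i) /andP[].
split=> [| i].
- exact: (loss_bound e_gt0 e_sum1 v_gt0 rho_bounded f_ge f_lt v_le_max).
- exact: (regret_bound e_gt0 e_sum1 v_gt0 rho_bounded f_ge f_lt u_incr u_sat u_lip).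
Qed.
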